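(* Let the data vector $S\in\mathbb{R}^d$ be Gaussian with mean $\beta^*\in\mathbb{R}^d$ and identity covariance. Let $D\in\mathbb{R}^{p\times d}$, $P\in\mathbb{R}^{p\times p}$, $q\in\mathbb{R}^p$, let $\Lambda_g^*$ be the convex conjugate of the log-MGF of the randomization, and let $b_{\mathcal{R}_O}$ be a barrier function on $\mathcal{R}_O\subset\mathbb{R}^p$. Define \[ \Gamma(\beta^* )=\sup_{z\in\mathbb{R}^d}\Big\{z^T\beta^*-\tfrac12 z^Tz-\inf_{o\in\mathbb{R}^p}\big\{\Lambda_g^*(Dz+Po+q)+b_{\mathcal{R}_O}(o)\big\}\Big\} \] and the pseudo truncated likelihood $\tilde\ell_E(s\mid\beta^* )$ by $\log\tilde\ell_E(s\mid\beta^* )=-s^Ts/2+\beta^{*T}s-\Gamma(\beta^* )+\text{const}$. Then the approximate selective MLE $\beta^{*\mathrm{MLE}}$, the maximizer of $\beta^*\mapsto\log\tilde\ell_E(s\mid\beta^* )$, satisfies \[ \nabla\Gamma\big(\beta^{*\mathrm{MLE}}\big)=s. \]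
   Context: $\Lambda_g^*(w)=\sup_t\{t^Tw-\Lambda_g(t)\}$ where $\Lambda_g(t)=\log\mathbb{E}[\exp(t^T\Omega)]$ is the log-MGF of the randomization $\Omega\in\mathbb{R}^p$. A barrier function $b_{\mathcal{R}_O}$ is a convex penalty finite on the interior of $\mathcal{R}_O$ increasing continuously towards its boundary. *)

From HB Require Import structures.
From mathcomp Require Import all_boot all_order all_algebra.
From mathcomp Require Import all_classical all_reals all_analysis.
Set Implicit Arguments. Unset Strict Implicit. Unset Printing Implicit Defensive.
Import Order.TTheory GRing.Theory Num.Theory.
Import numFieldNormedType.Exports.
Local Open Scope classical_set_scope.
Local Open Scope ring_scope.

Definition dotv (R : realType) (n : nat) (u v : 'rV[R]_n) : R :=
  \sum_(i < n) u 0 i * v 0 i.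

Section Randomization.
Variables (R : realType) (p : nat) (d0 : measure_display) (T : measurableType d0)
  (P : probability T R) (Omega : 'I_p -> T -> R).
Local Open Scope ereal_scope.

Definition tOmega (t : 'rV[R]_p) (x : T) : R := (\sum_(i < p) t 0 i * Omega i x)%R.

Definition logMGF (t : 'rV[R]_p) : \bar R :=
  lne (\int[P]_x (expR (tOmega t x))%:E).

Definition logMGF_conj (w : 'rV[R]_p) : \bar R :=
  ereal_sup [set (dotv t w)%:E - logMGF t | t in [set: 'rV[R]_p]].
End Randomization.

Definition barrier (R : realType) (p : nat) (RO : set 'rV[R]_p)
    (b : 'rV[R]_p -> \bar R) : Prop :=
  (forall (o1 o2 : 'rV[R]_p) (t : R), 0 <= t <= 1 ->
        ((b ((t *: o1 + (1 - t) *: o2)%R) <= t%:E * b o1 + (1 - t)%:E * b o2)%E) /\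
      (forall o, (interior RO) o -> b o \is a fin_num) /\
      (forall o, ~ (interior RO) o -> b o = +oo%E) /\
      continuous (from_subspace (interior RO) (fine \o b)) /\
      (forall o0, closure RO o0 -> ~ (interior RO) o0 ->
         (b @ (within (interior RO) (nbhs o0)) --> +oo%E))).

(* Gamma(beta) = sup_z { z^T beta - z^T z / 2
                         - inf_o { Lambda_g^*(D z + P o + q) + b(o) } },
   with D : p x d, Pm : p x p, q in R^p; vectors are rows, so  D z  is
   written  z *m D^T  and  P o  is  o *m Pm^T. *)
Definition Gamma (R : realType) (d p : nat) (Lstar : 'rV[R]_p -> \bar R)
    (b : 'rV[R]_p -> \bar R) (D : 'M[R]_(p, d)) (Pm : 'M[R]_p) (q : 'rV[R]_p)
    (beta : 'rV[R]_d) : \bar R :=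
  ereal_sup [set ((dotv z beta - dotv z z / 2)%:E
                  - ereal_inf [set (Lstar ((z *m D^T + o *m Pm^T + q)%R) + b o)%E
                              | o in [set: 'rV[R]_p]])%E
            | z in [set: 'rV[R]_d]].

Definition log_pseudo_lik (R : realType) (d : nat) (G : 'rV[R]_d -> \bar R)
    (const : R) (s beta : 'rV[R]_d) : \bar R :=
  ((- dotv s s / 2 + dotv beta s + const)%:E - G beta)%E.

From HB Require Import structures.
From mathcomp Require Import all_boot all_order all_algebra.
From mathcomp Require Import all_classical all_reals all_analysis.
From mathcomp Require Import lra.
Import Order.TTheory GRing.Theory Num.Theory.
Import numFieldNormedType.Exports.
Local Open Scope classical_set_scope.
Local Open Scope ring_scope.

(* The maximizer of  beta |-> beta^T s - Gamma(beta)  is an interior maximum of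
   a function differentiable there, so by Fermat's rule its derivative in
   every direction h vanishes; since the derivative of  beta |-> beta^T s  in
   the direction h is  h^T s,  this says  d Gamma(betaMLE) h = s^T h. *)

Section Dotv.
Context {R : realType} {n : nat}.
Implicit Types u v w : 'rV[R]_n.

Lemma dotvC u v : dotv u v = dotv v u.
Proof. by apply: eq_bigr => i _; rewrite mulrC. Qed.

Lemma dotvDl u v w : dotv (u + v) w = dotv u w + dotv v w.
Proof. by rewrite /dotv -big_split; apply: eq_bigr => i _; rewrite mxE mulrDl. Qed.

Lemma dotvZl (a : R) u v : dotv (a *: u) v = a * dotv u v.
Proof. by rewrite /dotv mulr_sumr; apply: eq_bigr => i _; rewrite mxE mulrA. Qed.

Lemma is_derive_dotvl (s c v : 'rV[R]_n) :
  is_derive c v (fun x => dotv x s) (dotv v s).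
Proof.
have quotE : \forall t \near (0 : R)^',
    t^-1 *: (dotv (t *: v + c) s - dotv c s) = dotv v s.
  near=> t; have t_neq0 : t != 0 by near: t; exact: nbhs_dnbhs_neq.
  by rewrite dotvDl addrK dotvZl [_ *: _]mulrA mulVf // mul1r.
have quot_cvg : t^-1 *: (dotv (t *: v + c) s - dotv c s) @[t --> (0 : R)^']
    --> dotv v s by exact: cvg_near_cst.
by apply: DeriveDef; [exact: cvgP quot_cvg | exact: cvg_lim quot_cvg].
Unshelve. all: by end_near.
Qed.

End Dotv.

Lemma derive_local_max {R : realType} {V : normedModType R} (f : V -> R) (c v : V) :
  derivable f c v -> (\forall x \near c, f x <= f c) -> 'D_v f c = 0.
Proof.
move=> df fmax.
have line_cvg : t *: v + c @[t --> (0 : R)] --> c.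
  rewrite -[X in _ --> X](add0r c) -[X in X + c](scale0r v).
  by apply: cvgD; [exact: cvgZr_tmp cvg_id | exact: cvg_cst].
have fmax_line : \forall t \near (0 : R), f (t *: v + c) - f c <= 0.
  by near=> t; rewrite subr_le0; near: t; exact: line_cvg fmax.
apply/eqP; rewrite eq_le; apply/andP; split.
- apply: cvgr_to_le (cvg_dnbhs_at_right df) _; near=> t.
  apply: mulr_ge0_le0; last by near: t; exact: cvg_within fmax_line.
  by rewrite invr_ge0 ltW //; near: t; exact: nbhs_right_gt.
- apply: cvgr_to_ge (cvg_dnbhs_at_left df) _; near=> t.
  apply: mulr_le0; last by near: t; exact: cvg_within fmax_line.
  by rewrite invr_le0 ltW //; near: t; exact: nbhs_left_lt.
Unshelve. all: by end_near.
Qed.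

Theorem lemma2 (R : realType) (d p : nat)
  (d0 : measure_display) (T : measurableType d0) (Prob : probability T R)
  (Omega : 'I_p -> T -> R) (HOmega : forall i, measurable_fun setT (Omega i))
  (D : 'M[R]_(p, d)) (Pm : 'M[R]_p) (q : 'rV[R]_p)
  (RO : set 'rV[R]_p) (b : 'rV[R]_p -> \bar R) (Hb : barrier RO b)
  (const : R) (s betaMLE : 'rV[R]_d) :
  let G := Gamma (logMGF_conj Prob Omega) b D Pm q in
  (* betaMLE maximizes beta |-> log tilde-l_E(s | beta) *)
  (forall beta, (log_pseudo_lik G const s beta <= log_pseudo_lik G const s betaMLE)%E) ->
  (* Gamma is real-valued near betaMLE and differentiable there, so that
     grad Gamma(betaMLE) makes sense *)
  (\forall beta \near betaMLE, G beta \is a fin_num) ->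
  differentiable (fine \o G) betaMLE ->
  (* grad Gamma(betaMLE) = s, i.e. d Gamma(betaMLE) h = s^T h for all h *)
  forall h : 'rV[R]_d, 'd (fine \o G) betaMLE h = dotv s h.
Proof.
move=> G G_max G_fin G_diff h.
pose g := (fun x => dotv x s) - (fine \o G).
have G_fin_MLE : G betaMLE \is a fin_num by exact: nbhs_singleton G_fin.
have g_max : \forall x \near betaMLE, g x <= g betaMLE.
  near=> x; have G_fin_x : G x \is a fin_num by near: x.
  have := G_max x; rewrite /log_pseudo_lik -(fineK G_fin_x) -(fineK G_fin_MLE).
  by rewrite -!EFinB lee_fin /g !fctE; lra.
have dotv_der := is_derive_dotvl s betaMLE h.
have G_der : derivable (fine \o G) betaMLE h by exact: diff_derivable.
have : 'D_h g betaMLE = 0 by apply: derive_local_max g_max; exact: derivableB.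
rewrite deriveB // derive_val -deriveE // dotvC.
by move/eqP; rewrite subr_eq0 => /eqP.
Unshelve. all: by end_near.
Qed.
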